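(* Let $T:\mathbb{R}^n\to\mathbb{R}^n$ be topical. The set of additive eigenvectors of $T$ is nonempty and bounded in the variation norm if and only if $$r(T^J_{-\infty})<\lambda(T^{[n]\setminus J}_\infty)$$ for every nonempty proper subset $J\subset[n]$.
   Context: $T$ is topical if it is order-preserving ($x\le y\Rightarrow T(x)\le T(y)$, entrywise) and additively homogeneous ($T(x+c\mathbf{1})=T(x)+c\mathbf{1}$ for all $c\in\mathbb{R}$, $\mathbf{1}$ the all-ones vector). $x\in\mathbb{R}^n$ is an additive eigenvector if $T(x)=x+\lambda\mathbf{1}$ for some $\lambda\in\mathbb{R}$. Variation norm: $\|x\|_{\mathrm{var}}=\max_ix_i-\min_jx_j$. A topical $T$ extends continuously to order-preserving additively homogeneous maps on $(-\infty,\infty]^n$ and on $[-\infty,\infty)^n$, again denoted $T$. For $\alpha\in[-\infty,\infty]$, $P^J_\alpha(x)_j=x_j$ for $j\in J$ and $\alpha$ otherwise; $T^J_{-\infty}=P^J_{-\infty}TP^J_{-\infty}$ on $[-\infty,\infty)^n$ and $T^J_\infty=P^J_\infty TP^J_\infty$ on $(-\infty,\infty]^n$. For such maps $S$: $r(S)=\inf_{x\in\mathbb{R}^n}\max_i(S(x)_i-x_i)$ and $\lambda(S)=\sup_{x\in\mathbb{R}^n}\min_i(S(x)_i-x_i)$, with values in $[-\infty,\infty]$. *)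

From HB Require Import structures.
From mathcomp Require Import all_boot all_order all_algebra.
From mathcomp Require Import all_classical all_reals ereal.
Set Implicit Arguments. Unset Strict Implicit. Unset Printing Implicit Defensive.
Import Order.TTheory GRing.Theory Num.Theory.
Local Open Scope classical_set_scope.
Local Open Scope ring_scope.

Section Topical.
Variables (R : realType) (n : nat).

Definition topical (T : ('I_n -> R) -> 'I_n -> R) : Prop :=
  (forall x y : 'I_n -> R, (forall i, x i <= y i) -> forall i, T x i <= T y i) /\
  (forall (x : 'I_n -> R) (c : R), T (fun i => x i + c) = (fun i => T x i + c)).

Definition add_eigvecs (T : ('I_n -> R) -> 'I_n -> R) : set ('I_n -> R) :=
  [set x | exists lam : R, forall i, T x i = x i + lam].

(* variation norm: max_i x_i - min_j x_j = max_{i,j} (x_i - x_j) *)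
Definition var_norm (x : 'I_n -> R) : R :=
  \big[Num.max/0]_(i : 'I_n) \big[Num.max/0]_(j : 'I_n) (x i - x j).

Definition var_bounded (A : set ('I_n -> R)) : Prop :=
  exists M : R, forall x, A x -> var_norm x <= M.

Local Open Scope ereal_scope.

(* continuous (monotone) extension of T to [-oo,oo)^n: decreasing limit = inf *)
Definition ext_lo (T : ('I_n -> R) -> 'I_n -> R) (y : 'I_n -> \bar R) (i : 'I_n)
  : \bar R :=
  ereal_inf [set (T z i)%:E | z in [set z : 'I_n -> R | forall j, y j <= (z j)%:E]].

(* continuous (monotone) extension of T to (-oo,oo]^n: increasing limit = sup *)
Definition ext_hi (T : ('I_n -> R) -> 'I_n -> R) (y : 'I_n -> \bar R) (i : 'I_n)
  : \bar R :=
  ereal_sup [set (T z i)%:E | z in [set z : 'I_n -> R | forall j, (z j)%:E <= y j]].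

Definition projJ (J : {set 'I_n}) (a : \bar R) (y : 'I_n -> \bar R) : 'I_n -> \bar R :=
  fun j => if j \in J then y j else a.

Definition embed (x : 'I_n -> R) : 'I_n -> \bar R := fun j => (x j)%:E.

(* T^J_{-oo} = P^J_{-oo} T P^J_{-oo} and T^J_{+oo} = P^J_{+oo} T P^J_{+oo},
   evaluated at real points x (only these are used in r and lambda) *)
Definition TJ_minf (T : ('I_n -> R) -> 'I_n -> R) (J : {set 'I_n})
  (x : 'I_n -> R) : 'I_n -> \bar R :=
  projJ J -oo (ext_lo T (projJ J -oo (embed x))).

Definition TJ_pinf (T : ('I_n -> R) -> 'I_n -> R) (J : {set 'I_n})
  (x : 'I_n -> R) : 'I_n -> \bar R :=
  projJ J +oo (ext_hi T (projJ J +oo (embed x))).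

Definition rr (S : ('I_n -> R) -> 'I_n -> \bar R) : \bar R :=
  ereal_inf [set \big[maxe/-oo]_(i : 'I_n) (S x i - (x i)%:E) | x in [set: 'I_n -> R]].

Definition lam (S : ('I_n -> R) -> 'I_n -> \bar R) : \bar R :=
  ereal_sup [set \big[mine/+oo]_(i : 'I_n) (S x i - (x i)%:E) | x in [set: 'I_n -> R]].

End Topical.

(* For a proper J, a real a strictly between r(T^J_-oo) and
   lambda(T^{~J}_+oo) yields p with T p < p + a on J and q with T q > q + a
   off J.  Comparing with p and q shows that a vector which is a
   super-eigenvector on J and a sub-eigenvector off J cannot have a large gap
   between its J-part and the rest; by pigeonhole such vectors have bounded
   spread.  Truncating T from below at max_j T(x)_j - M gives a topical map
   whose image has spread at most M; it has an eigenvector (its least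
   sub-eigenvalue is attained by compactness, and the renormalised orbit of a
   minimal sub-eigenvector converges to an eigenvector), and its eigenvectors
   are of the above kind for T, hence have spread < M, hence are
   eigenvectors of T.  If the condition fails for J, an eigenvector u of T gives a
   super-eigenvector peaked on J and a sub-eigenvector dipped on the
   complement, with gaps as large as we like; the Knaster-Tarski fixed point
   squeezed between them is an eigenvector of large variation. *)
From HB Require Import structures.
From mathcomp Require Import all_boot all_order all_algebra.
From mathcomp Require Import all_classical all_reals ereal.
From mathcomp Require Import lra.
Set Implicit Arguments. Unset Strict Implicit. Unset Printing Implicit Defensive.
Import Order.TTheory GRing.Theory Num.Theory.
Local Open Scope classical_set_scope.
Local Open Scope ring_scope.

Section TopicalMaps.
Variables (R : realType) (n : nat).
Local Notation vec := ('I_n -> R).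
Implicit Types (x y z u v w : vec) (F : vec -> vec) (J : {set 'I_n}).
Implicit Types (beta mu s c e M : R).

Definition order_preserving F :=
  forall x y, (forall i, x i <= y i) -> forall i, F x i <= F y i.

Definition subeig F mu x := forall i, F x i <= x i + mu.
Definition supeig F mu x := forall i, x i + mu <= F x i.
Definition eigvec F mu x := forall i, F x i = x i + mu.

Lemma topical_shift F x c i : topical F -> F (fun j => x j + c) i = F x i + c.
Proof. by case=> _ hF; rewrite hF. Qed.

Lemma topical_le_shift F x y c : topical F ->
  (forall i, x i <= y i + c) -> forall i, F x i <= F y i + c.
Proof. by move=> tF xy i; rewrite -topical_shift //; case: tF => mF _; apply: mF. Qed.

Lemma eigvec_between F mu x y : order_preserving F -> (forall i, y i <= x i) ->
  supeig F mu y -> subeig F mu x ->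
  exists2 w, (forall i, y i <= w i <= x i) & eigvec F mu w.
Proof.
move=> mF yx ysup xsub.
pose W := [set v | (forall i, y i <= v i <= x i) /\ supeig F mu v].
have Wy : W y by split=> // i; rewrite lexx yx.
pose w i := sup [set v i | v in W].
have W_ne i : [set v i | v in W] !=set0 by exists (y i), y.
have hsW i : has_sup [set v i | v in W].
  by split=> //; exists (x i) => _ [v [vW _] <-]; case/andP: (vW i).
have le_w v i : W v -> v i <= w i.
  by move=> Wv; apply: sup_upper_bound (hsW i) _ _; exists v.
have w_le i : w i <= x i by apply: ge_sup => // _ [v [vW _] <-]; case/andP: (vW i).
have w_sup : supeig F mu w.
  move=> i; rewrite -lerBrDr; apply: ge_sup => // _ [v Wv <-].
  rewrite lerBrDr; apply: le_trans (Wv.2 i) _.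
  by apply: mF => j; apply: le_w.
pose Fw i := F w i - mu.
have W_Fw : W Fw.
  split=> i; last by rewrite /Fw subrK; apply: mF => j; rewrite lerBrDr.
  rewrite /Fw lerBrDr lerBlDr; apply/andP; split.
  - by apply: le_trans (ysup i) _; apply: mF => j; apply: le_w.
  - by apply: le_trans (xsub i); apply: mF => j; apply: w_le.
exists w => i; first by rewrite (le_w y) ?w_le.
by apply/eqP; rewrite eq_le w_sup andbT -lerBlDr; apply: (le_w Fw i W_Fw).
Qed.

Lemma subeig_of_iter F x m s : topical F -> (0 < m)%N ->
  (forall i, iter m F x i <= x i + m%:R * s) -> exists y, subeig F s y.
Proof.
move=> tF; case: m => // m _ iter_le.
pose a j i := iter j F x i - j%:R * s.
have aS j i : a j.+1 i = F (a j) i - s.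
  by rewrite /a topical_shift //= -natr1 mulrDl mul1r opprD addrA.
have a0 i : a 0%N i = x i by rewrite /a mul0r subr0.
have am i : a m.+1 i <= x i by rewrite /a lerBlDr; apply: iter_le.
pose y i := \big[Num.min/x i]_(j < m.+1) a j i.
have Fy_le (j : 'I_m.+1) i : F y i - s <= a j.+1 i.
  by rewrite aS lerD2r; case: tF => mF _; apply: mF => l; apply: bigmin_le.
exists y => i; rewrite -lerBlDr; apply: le_bigmin => [|[[|j] jm] _].
- exact: le_trans (Fy_le ord_max i) (am i).
- by rewrite a0; apply: le_trans (Fy_le ord_max i) (am i).
- exact: (Fy_le (Ordinal (ltnW jm))).
Qed.

Section Orbit.
Variables (F : vec -> vec) (z : vec) (mu : R).
Hypotheses (tF : topical F) (zsub : subeig F mu z).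

Definition orbit_seq m i := iter m F z i - m%:R * mu.
Definition orbit_bounded i := exists L, forall m, L <= orbit_seq m i.
Definition orbit_lim i := inf (range (orbit_seq ^~ i)).

Lemma orbit_seq0 : orbit_seq 0 = z.
Proof. by apply: funext => i; rewrite /orbit_seq mul0r subr0. Qed.

Lemma orbit_seqS m i : orbit_seq m.+1 i = F (orbit_seq m) i - mu.
Proof. by rewrite /orbit_seq topical_shift //= -natr1 mulrDl mul1r opprD addrA. Qed.

Lemma orbit_seq_nonincr m m' i : (m <= m')%N -> orbit_seq m' i <= orbit_seq m i.
Proof.
have step k j : orbit_seq k.+1 j <= orbit_seq k j.
  elim: k j => [|k IH] j; first by rewrite orbit_seqS orbit_seq0 lerBlDr; apply: zsub.
  by rewrite !orbit_seqS lerD2r; case: tF => mF _; apply: mF.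
move=> /subnK <-; elim: (m' - m)%N => [|d IH]; first by rewrite add0n.
by rewrite addSn; apply: le_trans (step _ _) IH.
Qed.

Lemma orbit_seq_below (b : vec) : (forall i, exists m, orbit_seq m i <= b i) ->
  exists m, forall i, orbit_seq m i <= b i.
Proof.
move=> /choice[f fb]; exists (\max_i f i)%N => i.
by apply: le_trans (fb i); apply: orbit_seq_nonincr; apply: leq_bigmax.
Qed.

Lemma orbit_unbounded i (b : R) : ~ orbit_bounded i -> exists m, orbit_seq m i <= b.
Proof.
move=> unb; apply: contrapT => /forallNP nom; apply: unb; exists b => m.
by have /negP := nom m; rewrite -ltNge => /ltW.
Qed.

Lemma orbit_lim_le m i : orbit_bounded i -> orbit_lim i <= orbit_seq m i.
Proof. by move=> [L HL]; apply: ge_inf; [exists L => _ [k _ <-] | exists m]. Qed.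

Lemma orbit_lim_approx i e : orbit_bounded i -> 0 < e ->
  exists m, orbit_seq m i <= orbit_lim i + e.
Proof.
move=> [L HL] e0; have hi : has_inf (range (orbit_seq ^~ i)).
  by split; [exists (orbit_seq 0 i), 0%N | exists L => _ [k _ <-]].
by have [_ [m _ <-] /ltW] := inf_adherent e0 hi; exists m.
Qed.

(* If every coordinate of the orbit diverged, some iterate would satisfy
   T^(m+1) z <= z + (m+1) (mu - 1/(m+1)), against the minimality of mu. *)
Lemma orbit_bounded_exists : (forall beta x, subeig F beta x -> mu <= beta) ->
  exists i, orbit_bounded i.
Proof.
move=> mu_min; apply: contrapT => /forallNP unb.
have [m below] := orbit_seq_below (fun i => orbit_unbounded (z i - 1) (unb i)).
have [y ysub] : exists y, subeig F (mu - m.+1%:R^-1) y.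
  apply: (subeig_of_iter tF (ltn0Sn m)) => i.
  rewrite mulrBr mulfV ?pnatr_eq0 //.
  have := orbit_seq_nonincr i (leqnSn m); have := below i; rewrite /orbit_seq; lra.
by have := mu_min _ _ ysub; rewrite lerBrDr -[leRHS]addr0 lerD2l invr_le0 lern0.
Qed.

Lemma orbit_lim_supeig z' : (forall i, orbit_bounded i -> orbit_lim i <= z' i) ->
  forall i, orbit_bounded i -> orbit_lim i + mu <= F z' i.
Proof.
move=> wz' i Ki; apply/ler_addgt0Pr => e e0.
have [m below] : exists m, forall l, orbit_seq m l <= z' l + e.
  apply: orbit_seq_below => l; have [Kl|/orbit_unbounded//] := pselect (orbit_bounded l).
  have [m close] := orbit_lim_approx Kl e0; exists m.
  by apply: le_trans close _; rewrite lerD2r wz'.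
apply: le_trans (topical_le_shift tF below i).
by rewrite -lerBrDr -orbit_seqS orbit_lim_le.
Qed.

Lemma orbit_lim_subeig : (forall i, orbit_bounded i) -> subeig F mu orbit_lim.
Proof.
move=> K i; rewrite -lerBlDr; apply: lb_le_inf; first by exists (orbit_seq 0 i), 0%N.
move=> _ [m _ <-]; apply: le_trans (orbit_seq_nonincr i (leqnSn m)).
by rewrite orbit_seqS lerD2r; case: tF => mF _; apply: mF => j; apply: orbit_lim_le.
Qed.

Lemma orbit_bounded_all M : (forall x i j, F x i - F x j <= M) ->
  (exists i, orbit_bounded i) -> forall i, orbit_bounded i.
Proof.
move=> spread [j Kj] i; exists (Num.min (z i) (orbit_lim j - M)) => -[|m].
  by rewrite ge_min orbit_seq0 lexx.
rewrite ge_min orbit_seqS; apply/orP; right.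
have := orbit_lim_le m.+1 Kj; rewrite orbit_seqS; have := spread (orbit_seq m) j i; lra.
Qed.

Lemma eigvec_orbit_lim M : (forall x i j, F x i - F x j <= M) ->
  (forall beta x, subeig F beta x -> mu <= beta) -> eigvec F mu orbit_lim.
Proof.
move=> spread mu_min; have K := orbit_bounded_all spread (orbit_bounded_exists mu_min).
move=> i; apply/eqP; rewrite eq_le orbit_lim_subeig //=.
by apply: orbit_lim_supeig => // j _.
Qed.

End Orbit.

Section BoundedSpread.
Variables (F : vec -> vec) (M : R) (i0 : 'I_n).
Hypotheses (tF : topical F) (spreadF : forall x i j, F x i - F x j <= M).

(* The least sub-eigenvalue r is attained by [upper], the increasing limit, as
   beta decreases to r, of the pointwise least normalised sub-eigenvectors
   [lower beta]. *)
Let subeig_vals := [set beta | exists x, subeig F beta x].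
Let r := inf subeig_vals.

Lemma subeig_lbound beta x : subeig F beta x -> F (fun=> 0) i0 - M <= beta.
Proof.
move=> xsub; have [j _ jmin] := arg_minP x (isT : predT i0).
have : F (fun=> 0) j + x j <= x j + beta.
  rewrite -topical_shift //; apply: le_trans (xsub j); case: tF => mF _.
  by apply: mF => k; rewrite add0r; apply: jmin.
by have := spreadF (fun=> 0) i0 j; lra.
Qed.

Lemma has_inf_subeig_vals : has_inf subeig_vals.
Proof.
split; last by exists (F (fun=> 0) i0 - M) => beta [x /subeig_lbound].
by exists (F (fun=> 0) i0 + M), (fun=> 0) => i /=; have := spreadF (fun=> 0) i i0; lra.
Qed.

Lemma inf_subeig_le beta x : subeig F beta x -> r <= beta.
Proof. by move=> xsub; apply: (ge_inf has_inf_subeig_vals.2); exists x. Qed.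

Lemma inf_subeig_lt beta : r < beta -> exists x, subeig F beta x.
Proof.
move=> /(inf_lt has_inf_subeig_vals.1) [b [x xsub] b_lt]; exists x => i.
by apply: le_trans (xsub i) _; rewrite lerD2l ltW.
Qed.

Let normalized beta := [set y | subeig F beta y /\ forall i, - M <= y i <= M].

Lemma normalized_ne beta : r < beta -> normalized beta !=set0.
Proof.
move=> /inf_subeig_lt[x xsub]; exists (fun i => F x i - F x i0); split=> i.
  rewrite topical_shift // addrAC lerD2r -topical_shift //.
  by case: tF => mF _; apply: mF => j; apply: xsub.
by rewrite lerNl opprB !spreadF.
Qed.

Let lower beta i := inf [set y i | y in normalized beta].

Lemma has_inf_normalized beta i : r < beta -> has_inf [set y i | y in normalized beta].
Proof.
move=> rb; split; first by have [y ny] := normalized_ne rb; exists (y i), y.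
by exists (- M) => _ [y [_ /(_ i)/andP[ylo _]] <-].
Qed.

Lemma lower_le beta y i : r < beta -> normalized beta y -> lower beta i <= y i.
Proof. by move=> rb ny; apply: (ge_inf (has_inf_normalized i rb).2); exists y. Qed.

Lemma lower_le_M beta i : r < beta -> lower beta i <= M.
Proof.
move=> rb; have [y ny] := normalized_ne rb; apply: le_trans (lower_le i rb ny) _.
by case: ny => _ /(_ i)/andP[].
Qed.

Lemma lower_subeig beta : r < beta -> subeig F beta (lower beta).
Proof.
move=> rb i; rewrite -lerBlDr; apply: lb_le_inf; first exact: (has_inf_normalized i rb).1.
move=> _ [y ny <-]; rewrite lerBlDr; apply: le_trans (ny.1 i).
by case: tF => mF _; apply: mF => j; apply: lower_le.
Qed.

Lemma lower_antitone (b1 b2 : R) i : r < b1 -> b1 <= b2 -> lower b2 i <= lower b1 i.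
Proof.
move=> rb1 b12; apply: lb_le_inf; first exact: (has_inf_normalized i rb1).1.
move=> _ [y [ysub ybd] <-]; apply: lower_le (lt_le_trans rb1 b12) _.
by split=> // j; apply: le_trans (ysub j) _; rewrite lerD2l.
Qed.

Let upper i := sup [set lower beta i | beta in [set beta | r < beta]].

Lemma has_sup_lower i : has_sup [set lower beta i | beta in [set beta | r < beta]].
Proof.
have r1 : r < r + 1 by rewrite ltrDl.
by split; [exists (lower (r + 1) i), (r + 1) | exists M => _ [b rb <-]; apply: lower_le_M].
Qed.

Lemma lower_le_upper beta i : r < beta -> lower beta i <= upper i.
Proof. by move=> rb; apply: sup_upper_bound (has_sup_lower i) _ _; exists beta. Qed.

Lemma upper_subeig : subeig F r upper.
Proof.
move=> i; apply/ler_addgt0Pr => e e0.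
have e2 : 0 < e / 2 by rewrite divr_gt0.
have /choice[b bP] : forall l, exists b, r < b /\ upper l - e / 2 < lower b l.
  by move=> l; have [_ [b rb <-] ?] := sup_adherent e2 (has_sup_lower l); exists b.
pose bmin := \big[Num.min/(r + e / 2)]_l b l.
have r_bmin : r < bmin by apply: lt_bigmin => [|l _]; [rewrite ltrDl | exact: (bP l).1].
have upper_le l : upper l <= lower bmin l + e / 2.
  rewrite -lerBlDr; apply/ltW/(lt_le_trans (bP l).2).
  by apply: lower_antitone => //; apply: bigmin_le.
apply: le_trans (topical_le_shift tF upper_le i) _.
have := lower_subeig r_bmin i; have := lower_le_upper i r_bmin.
have : bmin <= r + e / 2 by apply: bigmin_le_id.
lra.
Qed.

Lemma bounded_spread_eigvec : exists v mu, eigvec F mu v.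
Proof.
exists (orbit_lim F upper r), r.
apply: (eigvec_orbit_lim tF upper_subeig spreadF) => b x xsub; exact: inf_subeig_le xsub.
Qed.

End BoundedSpread.

Section Truncation.
Variable i0 : 'I_n.

Definition vmax x := \big[Num.max/x i0]_j x j.

Lemma vmax_ge x i : x i <= vmax x.
Proof. exact: le_bigmax. Qed.

Lemma vmax_attained x : exists j, vmax x = x j.
Proof.
rewrite /vmax; elim/big_ind: _ => [|_ _ [j ->] [k ->]|j _]; [by exists i0| |by exists j].
by case: leP => _; eexists.
Qed.

Lemma vmax_shift x c : vmax (fun i => x i + c) = vmax x + c.
Proof. by rewrite /vmax (big_morph (+%R^~ c) (fun a b => addr_maxl a b c) erefl). Qed.

Lemma vmax_le x y : (forall i, x i <= y i) -> vmax x <= vmax y.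
Proof.
by move=> xy; apply: bigmax_le => [|j _]; apply: le_trans (xy _) (vmax_ge y _).
Qed.

(* Raising every T(x)_i to at least max_j T(x)_j - M bounds the spread of the
   image by M, and does not affect eigenvectors of spread < M. *)
Definition truncate F M x i := Num.max (F x i) (vmax (F x) - M).

Lemma topical_truncate F M : topical F -> topical (truncate F M).
Proof.
case=> mF hF; split=> [x y xy i|x c].
  by apply: le_max2; [apply: mF | rewrite lerD2r; apply: vmax_le; apply: mF].
by apply: funext => i; rewrite /truncate hF vmax_shift addrAC addr_maxl.
Qed.

Lemma truncate_spread F M : 0 <= M -> forall x i j, truncate F M x i - truncate F M x j <= M.
Proof.
move=> M0 x i j.
have : truncate F M x i <= vmax (F x) by rewrite ge_max vmax_ge gerBl.
have : vmax (F x) - M <= truncate F M x j by rewrite le_max lexx orbT.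
lra.
Qed.

Lemma subeig_of_truncate F M mu v : eigvec (truncate F M) mu v -> subeig F mu v.
Proof. by move=> Gv i; rewrite -Gv le_max lexx. Qed.

Lemma supeig_of_truncate F M mu v : eigvec (truncate F M) mu v ->
  forall i k, v k < v i -> v i + mu <= F v i.
Proof.
move=> Gv i k vki; have : vmax (F v) - M <= v k + mu by rewrite -Gv le_max lexx orbT.
have := Gv i; rewrite /truncate; case: (leP (vmax (F v) - M) (F v i)) => _.
  by move=> ->.
lra.
Qed.

Lemma eigvec_of_truncate F M mu v : eigvec (truncate F M) mu v ->
  (forall i j, v i - v j < M) -> eigvec F mu v.
Proof.
move=> Gv spread i; have M0 : 0 <= M by have := spread i i; rewrite subrr => /ltW.
have := Gv i; rewrite /truncate; case: (leP (vmax (F v) - M) (F v i)) => // _.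
have [j Fj] := vmax_attained (F v); have := Gv j; rewrite /truncate -Fj max_l ?gerBl //.
have := spread j i; lra.
Qed.

End Truncation.

Lemma lte_EFin_between (a b : \bar R) : (a < b)%E -> exists c : R, (a < c%:E < b)%E.
Proof.
case: a b => [a||] [b||] //= ab.
- exists ((a + b) / 2); rewrite !lte_fin in ab *; apply/andP; split; lra.
- by exists (a + 1); rewrite !lte_fin ltry andbT; lra.
- by exists (b - 1); rewrite !lte_fin ltNyr /=; lra.
- by exists 0; rewrite ltNyr ltry.
Qed.

Lemma rr_TJ_minf_lt F J a : order_preserving F -> (rr (TJ_minf F J) < a%:E)%E ->
  exists p, forall i, i \in J -> F p i < p i + a.
Proof.
move=> mF /ereal_inf_lt[_ [x _ <-] xa].
have /choice[zf zfP] : forall i, exists z, i \in J ->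
    (forall j, j \in J -> x j <= z j) /\ F z i < x i + a.
  move=> i; case: (boolP (i \in J)) => iJ; last by exists x.
  have : (TJ_minf F J x i - (x i)%:E < a%:E)%E by apply: le_lt_trans (le_bigmax _ _ i) xa.
  rewrite lteBlDr // /TJ_minf /projJ iJ => /ereal_inf_lt[_ [z xz <-]].
  rewrite -EFinD lte_fin addrC => Fz; exists z => _; split=> // j jJ.
  by have := xz j; rewrite /projJ jJ /embed lee_fin.
pose p j := if j \in J then x j else \big[Num.min/0]_(i in J) zf i j.
have p_le i j : i \in J -> p j <= zf i j.
  move=> iJ; rewrite /p; case: ifPn => jJ; first exact: (zfP i iJ).1.
  exact: bigmin_le_cond.
exists p => i iJ; apply: le_lt_trans (mF _ _ (p_le i ^~ iJ) i) _.
by rewrite /p iJ; exact: (zfP i iJ).2.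
Qed.

Lemma lam_TJ_pinf_gt F J a : order_preserving F -> (a%:E < lam (TJ_pinf F J))%E ->
  exists q, forall k, k \in J -> q k + a < F q k.
Proof.
move=> mF /ereal_sup_gt[_ [y _ <-] ya].
have /choice[zf zfP] : forall k, exists z, k \in J ->
    (forall j, j \in J -> z j <= y j) /\ y k + a < F z k.
  move=> k; case: (boolP (k \in J)) => kJ; last by exists y.
  have : (a%:E < TJ_pinf F J y k - (y k)%:E)%E by apply: lt_le_trans ya (bigmin_le _ k _).
  rewrite lteBrDr // /TJ_pinf /projJ kJ => /ereal_sup_gt[_ [z zy <-]].
  rewrite -EFinD lte_fin addrC => Fz; exists z => _; split=> // j jJ.
  by have := zy j; rewrite /projJ jJ /embed lee_fin.
pose q j := if j \in J then y j else \big[Num.max/0]_(k in J) zf k j.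
have le_q k j : k \in J -> zf k j <= q j.
  move=> kJ; rewrite /q; case: ifPn => jJ; first exact: (zfP k kJ).1.
  exact: le_bigmax_cond.
exists q => k kJ; apply: lt_le_trans (mF _ _ (le_q k ^~ kJ) k).
by rewrite /q kJ; exact: (zfP k kJ).2.
Qed.

Lemma eigvec_le_lam_TJ_pinf F J mu u : eigvec F mu u -> (mu%:E <= lam (TJ_pinf F J))%E.
Proof.
move=> Fu; apply: le_ereal_sup_tmp; eexists; first by exists u.
apply: le_bigmin => [|i _]; first exact: leey.
rewrite /TJ_pinf /projJ; case: ifPn => iJ; last by rewrite addye ?leey.
rewrite leeBrDr // -EFinD; apply: le_ereal_sup_tmp; exists (F u i)%:E.
  by exists u => // j; rewrite /projJ /embed; case: ifPn => _; [exact: lexx | exact: leey].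
by rewrite Fu lee_fin addrC.
Qed.

Lemma rr_TJ_minf_le_eigvec F J mu u : eigvec F mu u -> (rr (TJ_minf F J) <= mu%:E)%E.
Proof.
move=> Fu; apply: ge_ereal_inf; eexists; first by exists u.
apply: bigmax_le => [|i _]; first exact: leNye.
rewrite /TJ_minf /projJ; case: ifPn => iJ; last by rewrite addNye ?leNye.
rewrite leeBlDr // -EFinD; apply: ge_ereal_inf; exists (F u i)%:E.
  by exists u => // j; rewrite /projJ /embed; case: ifPn => _; [exact: lexx | exact: leNye].
by rewrite Fu lee_fin addrC.
Qed.

Lemma rr_TJ_minf_ge F J a : (a%:E <= rr (TJ_minf F J))%E ->
  forall x, exists2 j, j \in J &
    forall z, (forall i, i \in J -> x i <= z i) -> x j + a <= F z j.
Proof.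
move=> a_le x.
have /bigmax_geP[|[j _]] : (a%:E <= \big[maxe/-oo]_i (TJ_minf F J x i - (x i)%:E))%E.
- by apply: le_trans a_le _; apply: ereal_inf_lbound; exists x.
- by rewrite leeNy_eq.
rewrite /TJ_minf /projJ; case: ifPn => jJ; last by rewrite addNye leeNy_eq.
rewrite leeBrDr // -EFinD => aj; exists j => // z xz.
have : (ext_lo F (projJ J -oo (embed x)) j <= (F z j)%:E)%E.
  apply: ereal_inf_lbound; exists z => // i; rewrite /projJ /embed.
  by case: ifPn => iJ; [rewrite lee_fin; apply: xz | exact: leNye].
by move/(le_trans aj); rewrite lee_fin addrC.
Qed.

Lemma lam_TJ_pinf_le F J a : (lam (TJ_pinf F J) <= a%:E)%E ->
  forall y, exists2 k, k \in J &
    forall z, (forall i, i \in J -> z i <= y i) -> F z k <= y k + a.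
Proof.
move=> le_a y.
have /bigmin_leP[|[k _]] : (\big[mine/+oo]_i (TJ_pinf F J y i - (y i)%:E) <= a%:E)%E.
- by apply: le_trans le_a; apply: ereal_sup_ubound; exists y.
- by rewrite leye_eq.
rewrite /TJ_pinf /projJ; case: ifPn => kJ; last by rewrite addye // leye_eq.
rewrite leeBlDr // -EFinD => ka; exists k => // z zy.
have : ((F z k)%:E <= ext_hi F (projJ J +oo (embed y)) k)%E.
  apply: ereal_sup_ubound; exists z => // i; rewrite /projJ /embed.
  by case: ifPn => iJ; [rewrite lee_fin; apply: zy | exact: leey].
by move/le_trans => /(_ _ ka); rewrite lee_fin addrC.
Qed.

Definition split_eig F J mu v :=
  (forall i, i \in J -> v i + mu <= F v i) /\ (forall k, k \notin J -> F v k <= v k + mu).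

Definition gap J c v := forall i k, i \in J -> k \notin J -> c <= v i - v k.

Lemma split_eig_gap_bounded F J a p q : topical F ->
  (exists i, i \in J) -> (exists k, k \notin J) ->
  (forall i, i \in J -> F p i < p i + a) -> (forall k, k \notin J -> q k + a < F q k) ->
  exists c, forall v mu, split_eig F J mu v -> ~ gap J c v.
Proof.
move=> tF [i1 i1J] [k1 k1J] pJ qJ.
pose c := \big[Num.max/0]_i \big[Num.max/0]_k Num.max (p i - p k) (q i - q k).
have c_ge i k : p i - p k <= c /\ q i - q k <= c.
  have : Num.max (p i - p k) (q i - q k) <= c.
    by apply: le_trans (le_bigmax _ _ i); apply: le_bigmax.
  by rewrite ge_max => /andP.
(* Comparing v with p where v - p is largest on J gives mu < a; comparing it
   with q where v - q is smallest off J gives a < mu. *)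
exists c => v mu [vsup vsub] vgap.
have [i0 i0J i0max] := arg_maxP (fun i => v i - p i) i1J.
have v_le l : v l <= p l + (v i0 - p i0).
  case: (boolP (l \in J)) => lJ; first by have /= := i0max l lJ; lra.
  by have := vgap i0 l i0J lJ; have := (c_ge i0 l).1; lra.
have := topical_le_shift tF v_le i0; have := vsup i0 i0J; have := pJ i0 i0J.
have [k0 k0J k0min] := arg_minP (P := [pred k | k \notin J]) (fun k => v k - q k) k1J.
have v_ge l : q l <= v l + (q k0 - v k0).
  case: (boolP (l \in J)) => lJ; last by have /= := k0min l lJ; lra.
  by have := vgap l k0 lJ k0J; have := (c_ge l k0).2; lra.
have := topical_le_shift tF v_ge k0; have := vsub k0 k0J; have := qJ k0 k0J.
lra.
Qed.

Lemma large_spread_gap v c a b : 0 < c -> n%:R * c <= v a - v b ->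
  exists J, [/\ a \in J, b \notin J & gap J c v].
Proof.
(* Without a gap, the level sets S m grow strictly, so S n.-1 would contain b. *)
move=> c0 ab; apply: contrapT => /forallNP nogap.
pose S m := [set i | v a - m%:R * c <= v i]%SET.
have aS m : a \in S m by rewrite inE gerBl mulr_ge0 // ltW.
have bS m : (m < n)%N -> b \notin S m.
  move=> mn; rewrite inE -ltNge.
  have : m%:R * c < n%:R * c by rewrite ltr_pM2r // ltr_nat.
  lra.
have grow m : (m < n)%N -> (m < #|S m|)%N.
  elim: m => [|m IH] mn; first by apply/card_gt0P; exists a.
  apply: leq_ltn_trans (IH (ltnW mn)) _; apply: proper_card; apply/properP; split.
    apply/fintype.subsetP => j; rewrite !inE; apply: le_trans.
    by rewrite lerD2l lerN2 ler_pM2r // ler_nat.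
  have [i [k [iS kS ik]]] : exists i k, [/\ i \in S m, k \notin S m & v i - v k < c].
    apply: contrapT => /forallNP noik; apply: (nogap (S m)); split.
    - exact: aS.
    - exact: bS (ltnW mn).
    by move=> i k iS kS; rewrite leNgt; apply/negP => ik; apply: (noik i); exists k; split.
  exists k => //; move: iS; rewrite !inE -natr1 mulrDl mul1r; lra.
have n0 : (0 < n)%N := leq_ltn_trans (leq0n a) (ltn_ord a).
have Sfull : S n.-1 = [set: 'I_n]%SET.
  apply/eqP; rewrite eqEcard finset.subsetT cardsT card_ord /=.
  by rewrite -{1}(prednK n0); apply: grow; rewrite ltn_predL.
by have := bS n.-1; rewrite Sfull inE ltn_predL => /(_ n0).
Qed.

Definition gap_condition F := forall J : {set 'I_n}, J != finset.set0 ->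
  J != [set: 'I_n]%SET -> (rr (TJ_minf F J) < lam (TJ_pinf F (~: J)))%E.

Lemma gap_condition_uniform F : topical F -> gap_condition F ->
  exists2 c, 0 < c & forall J v mu, (exists i, i \in J) -> (exists k, k \notin J) ->
    split_eig F J mu v -> ~ gap J c v.
Proof.
move=> tF cond.
have /choice[cJ cJP] : forall J, exists c, (exists i, i \in J) -> (exists k, k \notin J) ->
    forall v mu, split_eig F J mu v -> ~ gap J c v.
  move=> J; have [Jn0|] := pselect (exists i, i \in J); last by exists 0.
  have [JnT|] := pselect (exists k, k \notin J); last by exists 0.
  have J0 : J != finset.set0 by apply/set0Pn.
  have JT : J != [set: 'I_n]%SET.
    by case: JnT => k kJ; apply: contraNneq kJ => ->; rewrite inE.
  have [a /andP[ra al]] := lte_EFin_between (cond J J0 JT).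
  have [p pJ] := rr_TJ_minf_lt (proj1 tF) ra.
  have [q qJ] := lam_TJ_pinf_gt (proj1 tF) al.
  have qJ' k : k \notin J -> q k + a < F q k by move=> kJ; apply: qJ; rewrite inE.
  by have [c cP] := split_eig_gap_bounded tF Jn0 JnT pJ qJ'; exists c.
exists (Num.max 1 (\big[Num.max/0]_J cJ J)) => [|J v mu Jn0 JnT vsplit vgap].
  by rewrite lt_max ltr01.
apply: (cJP J Jn0 JnT v mu vsplit) => i k iJ kJ; apply: le_trans (vgap i k iJ kJ).
by rewrite le_max (le_bigmax _ _ J) orbT.
Qed.

Lemma gap_condition_spread F : topical F -> gap_condition F ->
  exists2 M, 0 < M & forall v mu, subeig F mu v ->
    (forall i k, v k < v i -> v i + mu <= F v i) -> forall i j, v i - v j < M.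
Proof.
move=> tF cond; have [c c0 nogap] := gap_condition_uniform tF cond.
exists (n.+1%:R * c) => [|v mu vsub vsup i j]; first by rewrite mulr_gt0.
rewrite ltNge; apply/negP => ij.
have ij' : n%:R * c <= v i - v j by apply: le_trans ij; rewrite ler_pM2r // ler_nat.
have [J [iJ jJ Jgap]] := large_spread_gap c0 ij'.
apply: (nogap J v mu _ _ _ Jgap); [by exists i | by exists j | split=> [l lJ|k _]].
  by apply: (vsup l j); have := Jgap l j lJ jJ; lra.
exact: vsub.
Qed.

Lemma gap_condition_eigvecs F (i0 : 'I_n) : topical F -> gap_condition F ->
  (exists v mu, eigvec F mu v) /\
  exists M, forall v mu, eigvec F mu v -> forall i j, v i - v j <= M.
Proof.
move=> tF cond; have [M M0 Mspread] := gap_condition_spread tF cond.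
have [v [mu Gv]] := bounded_spread_eigvec i0 (topical_truncate i0 M tF)
  (truncate_spread i0 F (ltW M0)).
split.
  exists v, mu; apply: (eigvec_of_truncate Gv).
  exact: Mspread (subeig_of_truncate Gv) (supeig_of_truncate Gv).
by exists M => u nu Fu i j; apply/ltW/Mspread => [l|l k _]; rewrite Fu.
Qed.

(* Off J the orbit of [penalize F J mu] from an eigenvector of F drops by 1
   at each step, so it can only stay bounded on J. *)
Definition penalize F J mu x i := if i \in J then F x i else x i + mu - 1.

Lemma topical_penalize F J mu : topical F -> topical (penalize F J mu).
Proof.
case=> mF hF; split=> [x y xy i|x c].
  by rewrite /penalize; case: ifP => _; [apply: mF | rewrite !lerD2r].
by apply: funext => i; rewrite /penalize; case: ifP => _; [rewrite hF | lra].
Qed.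

Lemma glue_supeig F mu u w (K : 'I_n -> Prop) k0 G : topical F -> eigvec F mu u -> K k0 ->
  (forall z, (forall i, K i -> w i <= z i) -> forall i, K i -> w i + mu <= F z i) ->
  exists v, supeig F mu v /\ forall k, ~ K k -> v k + G <= v k0.
Proof.
move=> tF Fu Kk0 wsup.
pose s := \big[Num.max/0]_i Num.max (u i - w i) (u i - w k0 + G).
have s_ge i : u i - w i <= s /\ u i - w k0 + G <= s.
  have : Num.max (u i - w i) (u i - w k0 + G) <= s by apply: le_bigmax.
  by rewrite ge_max => /andP.
pose v i := if `[< K i >] then w i else u i - s.
have vK i : K i -> v i = w i by move=> Ki; rewrite /v asboolT.
have vNK i : ~ K i -> v i = u i - s by move=> Ki; rewrite /v asboolF.
have u_le_v i : u i <= v i + s.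
  have [Ki|Ki] := pselect (K i); last by rewrite vNK // subrK.
  by rewrite vK //; have := (s_ge i).1; lra.
exists v; split=> [i|k Kk]; last by rewrite vNK // vK //; have := (s_ge k).2; lra.
have [Ki|Ki] := pselect (K i).
  by rewrite {1}vK //; apply: wsup => // l Kl; rewrite vK.
have := topical_le_shift tF u_le_v i; rewrite Fu vNK //; lra.
Qed.

Lemma peaked_supeig F J mu u G : topical F -> eigvec F mu u -> 0 < G ->
  (forall x, exists2 j, j \in J &
    forall z, (forall i, i \in J -> x i <= z i) -> x j + mu <= F z j) ->
  exists v, supeig F mu v /\
    exists2 j, j \in J & (forall i, v i <= v j) /\ (forall k, k \notin J -> v k + G <= v j).
Proof.
move=> tF Fu G0 JP; pose H := penalize F J mu.
have tH : topical H := topical_penalize J mu tF.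
have uH : subeig H mu u by move=> i; rewrite /H /penalize Fu; case: ifP => _; lra.
have mu_min beta x : subeig H beta x -> mu <= beta.
  move=> xsub; have [j jJ /(_ x (fun _ _ => lexx _))] := JP x.
  by have := xsub j; rewrite /H /penalize jJ; lra.
have [k0 Kk0] := orbit_bounded_exists tH uH mu_min.
have wsup := orbit_lim_supeig tH uH.
have KJ i : orbit_bounded H u mu i -> i \in J.
  move=> Ki; apply: contrapT => /negP iJ.
  by have := wsup _ (fun _ _ => lexx _) i Ki; rewrite /H /penalize (negbTE iJ); lra.
have wsupF z : (forall i, orbit_bounded H u mu i -> orbit_lim H u mu i <= z i) ->
    forall i, orbit_bounded H u mu i -> orbit_lim H u mu i + mu <= F z i.
  by move=> wz i Ki; have := wsup z wz i Ki; rewrite /H /penalize KJ.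
have [v [vsup vgap]] := glue_supeig G tF Fu Kk0 wsupF.
have [j _ jmax] := arg_maxP v (isT : predT k0).
have kgap k : k \notin J -> v k + G <= v j.
  by move=> kJ; apply: le_trans (vgap k _) (jmax k0 isT) => /KJ; rewrite (negbTE kJ).
exists v; split=> //; exists j; last by split=> // i; apply: jmax.
by apply: contraT => /kgap; lra.
Qed.

Definition dual F x i := - F (fun j => - x j) i.

Lemma topical_dual F : topical F -> topical (dual F).
Proof.
case=> mF hF; split=> [x y xy i|x c].
  by rewrite /dual lerN2; apply: mF => j; rewrite lerN2.
apply: funext => i; rewrite /dual.
have -> : (fun j => - (x j + c)) = (fun j => - x j - c) by apply: funext => j; rewrite opprD.
by rewrite hF opprD opprK.
Qed.

Lemma dipped_subeig F J mu u G : topical F -> eigvec F mu u -> 0 < G ->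
  (forall y, exists2 k, k \in J &
    forall z, (forall i, i \in J -> z i <= y i) -> F z k <= y k + mu) ->
  exists v, subeig F mu v /\
    exists2 k, k \in J & (forall i, v k <= v i) /\ (forall i, i \notin J -> v k + G <= v i).
Proof.
move=> tF Fu G0 JP.
have Fu' : eigvec (dual F) (- mu) (fun j => - u j).
  move=> i; rewrite /dual.
  have -> : (fun j => - - u j) = u by apply: funext => j; rewrite opprK.
  by rewrite Fu opprD.
have JP' x : exists2 j, j \in J & forall z, (forall i, i \in J -> x i <= z i) ->
    x j - mu <= dual F z j.
  have [k kJ kP] := JP (fun j => - x j); exists k => // z xz.
  have := kP (fun j => - z j) (fun i iJ => ltac:(rewrite lerN2; exact: xz)).
  by rewrite /dual; lra.
have [v [vsup [j jJ [jmax jgap]]]] := peaked_supeig (topical_dual tF) Fu' G0 JP'.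
exists (fun i => - v i); split; first by move=> i; have := vsup i; rewrite /dual; lra.
exists j => //; split=> [i|i iJ]; first by have := jmax i; lra.
by have := jgap i iJ; lra.
Qed.

Lemma eigvecs_gap_condition F : topical F -> (exists u mu, eigvec F mu u) ->
  (exists M, forall v mu, eigvec F mu v -> forall i j, v i - v j <= M) -> gap_condition F.
Proof.
move=> tF [u [mu Fu]] [M Mspread] J _ _; rewrite ltNge; apply/negP => lam_le_rr.
have mu_le_rr := le_trans (eigvec_le_lam_TJ_pinf (~: J) Fu) lam_le_rr.
have lam_le_mu := le_trans lam_le_rr (rr_TJ_minf_le_eigvec J Fu).
pose G := Num.max M 0 + 1.
have [Mmax max0] : M <= Num.max M 0 /\ 0 <= Num.max M 0 by split; rewrite le_max lexx ?orbT.
have G0 : 0 < G by rewrite /G; lra.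
have MG : M < G by rewrite /G; lra.
have [v [vsup [j jJ [jmax jgap]]]] := peaked_supeig tF Fu G0 (rr_TJ_minf_ge mu_le_rr).
have [v' [v'sub [k kJ [kmin kgap]]]] := dipped_subeig tF Fu G0 (lam_TJ_pinf_le lam_le_mu).
pose y i := v i + (G - v j).
pose x i := v' i - v' k.
have ysup : supeig F mu y by move=> i; rewrite /y topical_shift //; have := vsup i; lra.
have xsub : subeig F mu x by move=> i; rewrite /x topical_shift //; have := v'sub i; lra.
have yx i : y i <= x i.
  rewrite /y /x; case: (boolP (i \in J)) => iJ.
    by have := jmax i; have := kgap i; rewrite finset.in_setC iJ => /(_ isT); lra.
  by have := jgap i iJ; have := kmin i; lra.
have [w wyx Fw] := eigvec_between (proj1 tF) yx ysup xsub.
have /andP[yj _] := wyx j; have /andP[_ xk] := wyx k.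
by have := Mspread w mu Fw j k; rewrite /y /x in yj xk; lra.
Qed.

Lemma var_norm_ge x i j : x i - x j <= var_norm x.
Proof. by apply: le_trans (le_bigmax _ _ i); apply: le_bigmax. Qed.

Lemma var_norm_le x M : 0 <= M -> (forall i j, x i - x j <= M) -> var_norm x <= M.
Proof. by move=> M0 xM; apply: bigmax_le => // i _; apply: bigmax_le. Qed.

End TopicalMaps.

Theorem theorem7p4 (R : realType) (n : nat) (T : ('I_n -> R) -> 'I_n -> R) :
  topical T ->
  ((add_eigvecs T !=set0) /\ var_bounded (add_eigvecs T) <->
   (forall J : {set 'I_n}, J != finset.set0 -> J != [set: 'I_n]%SET ->
      (rr (TJ_minf T J) < lam (TJ_pinf T (~: J)))%E)).
Proof.
move=> tT; split.
- case=> [[u [mu Fu]] [M Mvar]]; apply: eigvecs_gap_condition tT _ _; first by exists u, mu.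
  exists M => v nu Fv i j.
  exact: le_trans (var_norm_ge v i j) (Mvar v (ex_intro _ nu Fv)).
- case: n T tT => [|n] T tT cond.
    split; first by exists (fun=> 0), 0 => -[].
    by exists 0 => x _; rewrite /var_norm big_ord0.
  have [[v [mu Fv]] [M Mspread]] := gap_condition_eigvecs ord0 tT cond.
  split; first by exists v, mu.
  exists (Num.max M 0) => x [nu Fx]; apply: var_norm_le; first by rewrite le_max lexx orbT.
  by move=> i j; apply: le_trans (Mspread x nu Fx i j) _; rewrite le_max lexx.
Qed.
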